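(* Let $k\ge2$ and let $r=(r_{ij})$ be a maximally-connected coupling of the 1-2 system of $(R^1,R^2)$. Suppose $r_{ij}>0$ for some $i\neq j$. If $p_i+p_j\le q_i+q_j$, then $r_{ab}=0$ for all $a\ne b$ with $b\neq j$ (all nonzero off-diagonal entries lie in column $j$). If $p_i+p_j\ge q_i+q_j$, then $r_{ab}=0$ for all $a\ne b$ with $a\neq i$ (all nonzero off-diagonal entries lie in row $i$).
   Context: Let $R^1,R^2$ be two stochastically unrelated random variables with values in $\{1,\dots,k\}$, $\Pr[R^1=i]=p_i$, $\Pr[R^2=i]=q_i$, where $p_i,q_i\ge0$ and $\sum_i p_i=\sum_i q_i=1$. A maximally-connected coupling of the 1-2 system is a $k\times k$ matrix $r=(r_{ij})$ of nonnegative reals such that: $\sum_j r_{ij}=p_i$ and $\sum_i r_{ij}=q_j$ for all $i,j$; $r_{ii}=\min(p_i,q_i)$ for all $i$; and $r_{ii}+r_{ij}+r_{ji}+r_{jj}=\min(p_i+p_j,q_i+q_j)$ for all $i<j$. *)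

From HB Require Import structures.
From mathcomp Require Import all_boot all_order all_algebra.
Set Implicit Arguments. Unset Strict Implicit. Unset Printing Implicit Defensive.
Import Order.TTheory GRing.Theory Num.Theory.
Local Open Scope ring_scope.

Definition is_distr (R : realFieldType) (k : nat) (p : 'I_k -> R) : Prop :=
  (forall i, 0 <= p i) /\ \sum_(i < k) p i = 1.

Definition max_connected_coupling (R : realFieldType) (k : nat)
    (p q : 'I_k -> R) (r : 'I_k -> 'I_k -> R) : Prop :=
  [/\ (forall i j, 0 <= r i j),
      (forall i, \sum_(j < k) r i j = p i),
      (forall j, \sum_(i < k) r i j = q j),
      (forall i, r i i = Num.min (p i) (q i))
    & (forall i j : 'I_k, (i < j)%N ->
         r i i + r i j + r j i + r j j = Num.min (p i + p j) (q i + q j))].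

From HB Require Import structures.
From mathcomp Require Import all_boot all_order all_algebra.
From mathcomp Require Import lra.
Set Implicit Arguments. Unset Strict Implicit. Unset Printing Implicit Defensive.
Import Order.TTheory GRing.Theory Num.Theory.
Local Open Scope ring_scope.

(* Write d a := p a - q a.  Removing the diagonal min (p a) (q a) from row a
   leaves off-diagonal mass max (d a) 0, and column b keeps max (- d b) 0;
   so r a b > 0 forces d a > 0 > d b, and then the pair constraint for
   {a, b} (with r b a = 0) pins r a b = min (d a) (- d b).  If
   p i + p j <= q i + q j, i.e. d i <= - d j, then r i j = d i already
   exhausts row i, whereas any other positive r a b with b <> j would give
   r i b = min (d i) (- d b) > 0 in that row.  The other clause is the same
   statement for the transposed coupling. *)

Lemma max_connected_coupling_tr (R : realFieldType) (k : nat)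
    (p q : 'I_k -> R) (r : 'I_k -> 'I_k -> R) :
  max_connected_coupling p q r ->
  max_connected_coupling q p (fun a b => r b a).
Proof.
case=> r_ge0 rowE colE diagE pairE; split=> // [a|a b ab].
  by rewrite diagE minC.
by rewrite -(addrA (r a a)) (addrC (r b a)) addrA pairE // minC.
Qed.

Section Coupling.
Variables (R : realFieldType) (k : nat) (p q : 'I_k -> R).
Variable r : 'I_k -> 'I_k -> R.
Hypothesis coupling : max_connected_coupling p q r.

Lemma sum_offdiag_row a :
  \sum_(b | b != a) r a b = p a - Num.min (p a) (q a).
Proof.
case: coupling => _ rowE _ diagE _.
have := rowE a; rewrite (bigD1 a) //= diagE => rowE_a.
by rewrite -{1}rowE_a addrC addrK.
Qed.

Lemma offdiag_row_eq0 a b : p a <= q a -> a != b -> r a b = 0.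
Proof.
move=> pa_le_qa ab; have := sum_offdiag_row a.
rewrite min_l // subrr => /psumr_eq0P; apply; last by rewrite eq_sym.
by move=> c _; case: coupling.
Qed.

Lemma offdiag_gt0_row a b : a != b -> 0 < r a b -> q a < p a.
Proof.
move=> ab rab; rewrite ltNge; apply/negP => pa_le_qa.
by rewrite (offdiag_row_eq0 pa_le_qa ab) ltxx in rab.
Qed.

Lemma coupling_pair a b : a != b ->
  r a a + r a b + r b a + r b b = Num.min (p a + p b) (q a + q b).
Proof.
case: coupling => _ _ _ _ pairE ab.
case: (ltngtP a b) => [|ba|/val_inj abE]; first exact: pairE.
- by rewrite [p a + _]addrC [q a + _]addrC -pairE //; lra.
- by rewrite abE eqxx in ab.
Qed.

Lemma offdiag_val a b : q a < p a -> p b < q b ->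
  r a b = Num.min (p a - q a) (q b - p b).
Proof.
move=> qa_lt_pa pb_lt_qb.
have ab : a != b by apply: contraTneq qa_lt_pa => ->; rewrite -leNgt ltW.
have rba : r b a = 0 by rewrite offdiag_row_eq0 1?eq_sym // ltW.
have := coupling_pair ab; case: coupling => _ _ _ diagE _.
rewrite rba !diagE (min_r (ltW qa_lt_pa)) (min_l (ltW pb_lt_qb)).
by case: (leP (p a + p b) (q a + q b)); case: (leP (p a - q a) (q b - p b));
  lra.
Qed.

End Coupling.

Section Support.
Variables (R : realFieldType) (k : nat) (p q : 'I_k -> R).
Variable r : 'I_k -> 'I_k -> R.
Hypothesis coupling : max_connected_coupling p q r.

Lemma offdiag_gt0_col a b : a != b -> 0 < r a b -> p b < q b.
Proof.
move=> ab; apply: (offdiag_gt0_row (max_connected_coupling_tr coupling)).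
by rewrite eq_sym.
Qed.

Lemma offdiag_supp_col i j :
  i != j -> 0 < r i j -> p i + p j <= q i + q j ->
  forall a b, a != b -> b != j -> r a b = 0.
Proof.
move=> ij rij pij_le_qij a b ab bj.
have qi_lt_pi := offdiag_gt0_row coupling ij rij.
have pj_lt_qj := offdiag_gt0_col ij rij.
have rijE : r i j = p i - q i.
  by rewrite (offdiag_val coupling) // min_l //; lra.
have r_ge0 c d : 0 <= r c d by case: coupling.
apply/eqP; rewrite eq_le r_ge0 andbT leNgt; apply/negP => rab.
have pb_lt_qb := offdiag_gt0_col ab rab.
have bi : b != i by apply: contraTneq pb_lt_qb => ->; rewrite -leNgt ltW.
have rib_gt0 : 0 < r i b.
  by rewrite (offdiag_val coupling) // lt_min !subr_gt0 qi_lt_pi.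
have : r i j + r i b <= \sum_(c | c != i) r i c.
  rewrite (bigD1 j) 1?eq_sym //= (bigD1 b) /= ?bi ?bj // addrA lerDl.
  exact: sumr_ge0.
rewrite (sum_offdiag_row coupling) (min_r (ltW qi_lt_pi)) rijE; lra.
Qed.

End Support.

Theorem mainTheorem7 (R : realFieldType) (k : nat) (p q : 'I_k -> R)
    (r : 'I_k -> 'I_k -> R) (i j : 'I_k) :
  (2 <= k)%N ->
  is_distr p -> is_distr q ->
  max_connected_coupling p q r ->
  i != j -> 0 < r i j ->
  (p i + p j <= q i + q j ->
     forall a b : 'I_k, a != b -> b != j -> r a b = 0) /\
  (q i + q j <= p i + p j ->
     forall a b : 'I_k, a != b -> a != i -> r a b = 0).
Proof.
move=> _ _ _ coupling ij rij; split; first exact: offdiag_supp_col.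
move=> qij_le_pij a b ab ai.
have qji_le_pji : q j + q i <= p j + p i by rewrite addrC [p j + _]addrC.
apply: (offdiag_supp_col (max_connected_coupling_tr coupling) (i := j) (j := i));
  by rewrite // eq_sym.
Qed.
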